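(* Let $G$ be a finite abelian group and $A$ a finite dimensional $G$-graded algebra with a regular grading with bicharacter $\beta$ whose regular decomposition is minimal. Let $A=D_1\oplus\cdots\oplus D_k\oplus J(A)$ (vector space direct sum) where $D_1,\dots,D_k$ are graded subalgebras with $D_iD_j=0$ for $i\ne j$, each $D_i$ graded-isomorphic to $K^\alpha G$ for a 2-cocycle $\alpha$ inducing $\beta$. Then each $D_i$ is a (central) simple algebra, so this is an ordinary Wedderburn–Malcev decomposition of $A$, and $D_i\,J(A)\,D_j=0$ for all $1\le i\ne j\le k$.
   Context: All algebras are associative with unit over an algebraically closed field $K$ of characteristic $0$; $G$ is finite abelian, written additively. A $G$-graded algebra $A$ has a regular grading if (i) for every $n$ and every $(g_1,\dots,g_n)\in G^n$ there exist $a_i\in A_{g_i}$ with $a_1\cdots a_n\ne0$, and (ii) there is $\beta\colon G\times G\to K^*$ with $a_ga_h=\beta(g,h)a_ha_g$ for all homogeneous $a_g\in A_g,a_h\in A_h$ ($\beta$ = bicharacter of $A$). The regular decomposition is minimal if there do not exist $g\neq h$ in $G$ with $\beta(x,g)=\beta(x,h)$ for all $x\in G$. For a 2-cocycle $\alpha$, $K^\alpha G$ has basis $\{X_g\}$ with $X_gX_h=\alpha(g,h)X_{g+h}$ and grading $(K^\alpha G)_g=KX_g$; $\alpha$ induces $\beta$ if $\beta(g,h)=\alpha(g,h)\alpha(h,g)^{-1}$. $J(A)$ denotes the Jacobson radical. *)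

From HB Require Import structures.
From mathcomp Require Import all_boot all_order all_algebra all_field.
Set Implicit Arguments. Unset Strict Implicit. Unset Printing Implicit Defensive.
Import GRing.Theory.
Local Open Scope ring_scope.

Section Defs.
Variables (K : fieldType) (G : finZmodType) (A : falgType K).

Definition is_grading (Ag : G -> {vspace A}) : Prop :=
  [/\ (\sum_(g : G) Ag g)%VS = fullv,
      directv (\sum_(g : G) Ag g)%VS
    & forall g h, (Ag g * Ag h <= Ag (g + h)%R)%VS].

Definition regular_grading (Ag : G -> {vspace A}) (beta : G -> G -> K) : Prop :=
  [/\ is_grading Ag,
      (forall (n : nat) (gs : 'I_n -> G), exists a : 'I_n -> A,
          (forall i, a i \in Ag (gs i)) /\ \prod_(i < n) a i != 0),
      (forall g h, beta g h != 0)
    & (forall g h a b, a \in Ag g -> b \in Ag h -> a * b = beta g h *: (b * a))].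

Definition minimal_regular (beta : G -> G -> K) : Prop :=
  ~ exists g h : G, g != h /\ forall x, beta x g = beta x h.

Definition cocycle (alpha : G -> G -> K) : Prop :=
  (forall g h, alpha g h != 0) /\
  (forall g h l, alpha g h * alpha (g + h) l = alpha h l * alpha g (h + l)).

Definition induces (alpha beta : G -> G -> K) : Prop :=
  forall g h, beta g h = alpha g h / alpha h g.

(* Graded subalgebra (not necessarily containing 1 of A). *)
Definition graded_subalgebra (Ag : G -> {vspace A}) (D : {vspace A}) : Prop :=
  (D * D <= D)%VS /\ D = (\sum_(g : G) (D :&: Ag g))%VS.

(* D is graded-isomorphic to K^alpha G: an algebra isomorphism
   K^alpha G -> D mapping K X_g into D_g = D :&: A_g; equivalently the
   images X g of the basis {X_g} form a basis of D, are homogeneous of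
   degree g, and multiply via X_g X_h = alpha(g,h) X_(g+h). *)
Definition graded_iso_twisted (Ag : G -> {vspace A}) (D : {vspace A})
    (alpha : G -> G -> K) : Prop :=
  exists X : G -> A,
    [/\ forall g, X g \in (D :&: Ag g)%VS,
        basis_of D [seq X g | g <- enum G]
      & forall g h, X g * X h = alpha g h *: X (g + h)].

Definition left_ideal (L : {vspace A}) : Prop := (fullv * L <= L)%VS.

Definition maximal_left_ideal (L : {vspace A}) : Prop :=
  [/\ left_ideal L, L != fullv &
      forall L' : {vspace A}, left_ideal L' -> (L <= L')%VS -> L' != fullv -> L' = L].

Definition is_jacobson_radical (J : {vspace A}) : Prop :=
  forall x : A, x \in J <-> (forall L, maximal_left_ideal L -> x \in L).

Definition ideal_of (D I : {vspace A}) : Prop :=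
  [/\ (I <= D)%VS, (D * I <= I)%VS & (I * D <= I)%VS].

Definition simple_subalgebra (D : {vspace A}) : Prop :=
  [/\ (D * D <= D)%VS, (D * D)%VS != 0%VS &
      forall I, ideal_of D I -> I = 0%VS \/ I = D].

Definition central_simple_subalgebra (D : {vspace A}) : Prop :=
  simple_subalgebra D /\ \dim 'Z(D)%VS = 1%N.

End Defs.

From HB Require Import structures.
From mathcomp Require Import all_boot all_order all_algebra all_field.
From mathcomp Require Import ring.
Set Implicit Arguments. Unset Strict Implicit. Unset Printing Implicit Defensive.
Import GRing.Theory.
Local Open Scope ring_scope.

(* A cocycle is normalized, alpha(0,g) = alpha(g,0) = alpha(0,0), so beta(0,_) = 1
   and the degree-0 part of A is central; in each D_i the element
   e_i = alpha(0,0)^-1 X_0 is the unit.  As D_i D_j = 0, the central elements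
   e_i, e_j are orthogonal, whence D_i a D_j = D_i e_i a e_j D_j = 0 for every a.
   If I is a nonzero ideal of D, commuting an element of I with some X_h and
   subtracting a multiple of it kills one coefficient; by minimality of beta the
   support can be shrunk to a single X_g, so X_0 and then all of D lie in I.
   The same commutator computation shows a central element of D has no
   component outside degree 0. *)

Lemma mul_central_orth (R : pzRingType) (e f d a d' : R) :
    (forall x, e * x = x * e) -> e * f = 0 -> d * e = d -> f * d' = d' ->
  d * a * d' = 0.
Proof.
move=> ce ef de fd'.
by rewrite -de -fd' -(mulrA d) ce !mulrA -(mulrA _ e) ef mulr0 mul0r.
Qed.

Lemma prodv3_sub0 (K : fieldType) (A : falgType K) (U V W : {vspace A}) :
    (forall u v w, u \in U -> v \in V -> w \in W -> u * v * w = 0) ->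
  (U * V * W <= 0)%VS.
Proof.
move=> H; apply/prodvP => x w hx hw.
have : (U * V <= lker (amulr w))%VS.
  by apply/prodvP => u v hu hv; rewrite memv_ker lfunE /= (H u v w).
by move/subvP/(_ x hx); rewrite memv_ker lfunE /= => /eqP ->; apply: mem0v.
Qed.

Section Cocycle.
Variables (K : fieldType) (G : finZmodType) (alpha : G -> G -> K).
Hypothesis hcoc : cocycle alpha.

Lemma cocycle_neq0 g h : alpha g h != 0.
Proof. by case: hcoc. Qed.

Lemma cocycle0l l : alpha 0 l = alpha 0 0.
Proof.
case: hcoc => _ hc; have := hc 0 0 l; rewrite !add0r.
by move/(mulIf (cocycle_neq0 0 l)).
Qed.

Lemma cocycle0r g : alpha g 0 = alpha 0 0.
Proof.
case: hcoc => _ hc; have := hc g 0 0; rewrite !addr0.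
by move/(mulIf (cocycle_neq0 g 0)).
Qed.

Lemma induced_bichar0l beta g : induces alpha beta -> beta 0 g = 1.
Proof. by move->; rewrite cocycle0l cocycle0r divff ?cocycle_neq0. Qed.

Lemma induced_bichar0r beta g : induces alpha beta -> beta g 0 = 1.
Proof. by move->; rewrite cocycle0l cocycle0r divff ?cocycle_neq0. Qed.

End Cocycle.

Section RegularGrading.
Variables (K : fieldType) (G : finZmodType) (A : falgType K).
Variables (Ag : G -> {vspace A}) (beta : G -> G -> K).
Hypothesis hgr : is_grading Ag.
Hypothesis hcomm :
  forall g h a b, a \in Ag g -> b \in Ag h -> a * b = beta g h *: (b * a).
Hypothesis hmin : minimal_regular beta.

Lemma homog0_central z a : (forall g, beta 0 g = 1) -> z \in Ag 0 -> z * a = a * z.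
Proof.
move=> hb0 hz; case: hgr => hsum _ _.
have : a \in (\sum_(g : G) Ag g)%VS by rewrite hsum memvf.
case/memv_sumP => vs hvs ->; rewrite mulr_sumr mulr_suml; apply: eq_bigr => g _.
by rewrite (hcomm hz (hvs g isT)) hb0 scale1r.
Qed.

Lemma bichar_separates g g' : g != g' -> exists h, beta h g != beta h g'.
Proof.
move=> neq; apply/existsP; apply: contraT => /existsPn H.
by case: hmin; exists g, g'; split=> // x; apply/eqP; rewrite -[_ == _]negbK H.
Qed.

Section Twisted.
Variables (D : {vspace A}) (alpha : G -> G -> K) (X : G -> A).
Hypotheses (hcoc : cocycle alpha) (hind : induces alpha beta)
  (hXD : forall g, X g \in (D :&: Ag g)%VS)
  (hbas : basis_of D [seq X g | g <- enum G])
  (hmul : forall g h, X g * X h = alpha g h *: X (g + h)).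

Let anz := cocycle_neq0 hcoc.

Lemma twisted_mem g : X g \in D.
Proof. by case/memv_capP: (hXD g). Qed.

Lemma twisted_homog g : X g \in Ag g.
Proof. by case/memv_capP: (hXD g). Qed.

Lemma twisted_neq0 g : X g != 0.
Proof. exact/(free_not0 (basis_free hbas))/map_f/mem_enum. Qed.

Lemma twisted_coordP x : x \in D -> exists c : G -> K, x = \sum_(g : G) c g *: X g.
Proof.
case/andP: hbas => /eqP <- _; rewrite span_def big_map big_enum /=.
case/memv_sumP => vs hvs ->.
have /fin_all_exists[c hc] : forall g, exists k, vs g = k *: X g.
  by move=> g; apply/vlineP/hvs.
by exists c; apply: eq_bigr => g _.
Qed.

Lemma twisted_free (c : G -> K) s :
  \sum_(g : G) c g *: X (g + s) = 0 -> forall g, c g = 0.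
Proof.
case: hgr => _ /directv_sum_independent hI _.
rewrite (reindex_inj (addIr (- s))) /= => hs g.
have hs' : \sum_(i : G) c (i - s) *: X i = 0.
  by rewrite -[RHS]hs; apply: eq_bigr => i _; rewrite subrK.
have /eqP := hI _ (fun i _ => rpredZ _ (twisted_homog i)) hs' (g + s) isT.
by rewrite addrK scaler_eq0 (negbTE (twisted_neq0 _)) orbF => /eqP.
Qed.

Lemma twisted_commutator (c : G -> K) s h b :
  let x := \sum_(g : G) c g *: X (g + s) in
  X h * x - b *: (x * X h) =
    \sum_(g : G) (c g * (beta h (g + s) - b) * alpha (g + s) h) *: X (g + (s + h)).
Proof.
rewrite /= mulr_sumr mulr_suml scaler_sumr -sumrB; apply: eq_bigr => g _.
rewrite -scalerAr -scalerAl (hcomm (twisted_homog h) (twisted_homog (g + s))).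
by rewrite hmul addrA !scalerA -scalerBl; congr (_ *: _); ring.
Qed.

Definition twisted_unit := (alpha 0 0)^-1 *: X 0.

Lemma twisted_unit_mem : twisted_unit \in D.
Proof. exact/rpredZ/twisted_mem. Qed.

Lemma twisted_unit_central a : twisted_unit * a = a * twisted_unit.
Proof.
rewrite -scalerAl -scalerAr (homog0_central a _ (twisted_homog 0)) //.
by move=> g; apply: induced_bichar0l hind.
Qed.

Lemma mulr_twisted_unit d : d \in D -> d * twisted_unit = d.
Proof.
case/twisted_coordP => c ->; rewrite mulr_suml; apply: eq_bigr => g _.
rewrite -scalerAr -scalerAl hmul addr0 (cocycle0r hcoc) !scalerA.
by rewrite mulrAC mulVf ?mul1r.
Qed.

Section Ideal.
Variable I : {vspace A}.
Hypothesis hI : ideal_of D I.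

Lemma ideal_homog_of_support (n : nat) (c : G -> K) (s : G) :
    (#|[set g | c g != 0%R]| <= n)%N -> \sum_(g : G) c g *: X (g + s) \in I ->
    (exists g, c g != 0) ->
  exists g, X g \in I.
Proof.
case: hI => _ hDI hID.
elim: n c s => [|n IH] c s hcard hx [g0 cg0].
  by move: hcard; rewrite leqn0 cards_eq0 => /eqP/setP/(_ g0); rewrite !inE cg0.
have [g1 /andP[ne cg1] | single] :=
  pickP (fun g1 => (g1 != g0) && (c g1 != 0)); last first.
  have hx1 : \sum_(g : G) c g *: X (g + s) = c g0 *: X (g0 + s).
    rewrite (bigD1 g0) //= big1 ?addr0 // => g ne.
    by have := single g; rewrite ne => /negbFE/eqP->; rewrite scale0r.
  by exists (g0 + s); rewrite -(scalerK cg0 (X (g0 + s))) rpredZ // -hx1.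
have [h hh] : exists h, beta h (g1 + s) != beta h (g0 + s).
  by apply: bichar_separates; rewrite (inj_eq (addIr s)).
pose c' g := c g * (beta h (g + s) - beta h (g0 + s)) * alpha (g + s) h.
apply: (IH c' (s + h)); last by exists g1; rewrite !mulf_neq0 ?subr_eq0.
- have sub : [set g | c' g != 0] \subset [set g | c g != 0] :\ g0.
    apply/subsetP => g; rewrite !inE /c'.
    have [->|_] := eqVneq g g0; first by rewrite subrr mulr0 mul0r eqxx.
    by rewrite !mulf_eq0 !negb_or => /andP[/andP[]].
  apply: leq_trans (subset_leq_card sub) _.
  by move: hcard; rewrite (cardsD1 g0) inE cg0.
- rewrite -twisted_commutator rpredB ?rpredZ //.
    exact/(subvP hDI)/memv_mul/hx/twisted_mem.
  exact/(subvP hID)/memv_mul/twisted_mem.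
Qed.

Lemma ideal_homog : I != 0%VS -> exists g, X g \in I.
Proof.
move=> nz; have hx := memv_pick I; have xnz : vpick I != 0 by rewrite vpick0.
case: hI => hsub _ _; have [c hc] := twisted_coordP (subvP hsub _ hx).
have hc0 : \sum_(g : G) c g *: X (g + 0) = vpick I.
  by rewrite hc; apply: eq_bigr => g _; rewrite addr0.
apply: (@ideal_homog_of_support #|G| c 0); [exact: max_card | by rewrite hc0 |].
apply/existsP; apply: contraR xnz => /existsPn c0.
by rewrite hc big1 // => g _; rewrite (eqP (negbNE (c0 g))) scale0r.
Qed.

Lemma ideal_homog0 g : X g \in I -> X 0 \in I.
Proof.
case: hI => _ _ hID hg.
have := subvP hID _ (memv_mul hg (twisted_mem (- g))); rewrite hmul subrr.
by rewrite -{2}(scalerK (anz g (- g)) (X 0)) => /(rpredZ (alpha g (- g))^-1).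
Qed.

Lemma ideal_full : X 0 \in I -> I = D.
Proof.
case: hI => hsub hDI _ h0; apply/eqP; rewrite eqEsubv hsub /=.
case/andP: hbas => /eqP <- _; apply/span_subvP => _ /mapP[g _ ->].
have := subvP hDI _ (memv_mul (twisted_mem g) h0); rewrite hmul addr0.
by rewrite -{2}(scalerK (anz g 0) (X g)) => /(rpredZ (alpha g 0)^-1).
Qed.

End Ideal.

Lemma twisted_simple : (D * D <= D)%VS -> simple_subalgebra D.
Proof.
move=> hDD; split => //.
  apply/eqP => D2_0; have := memv_mul (twisted_mem 0) (twisted_mem 0).
  by rewrite D2_0 memv0 hmul scaler_eq0 (negbTE (anz 0 0)) (negbTE (twisted_neq0 _)).
move=> I hI; have [->|nz] := eqVneq I 0%VS; [by left | right].
have [g hg] := ideal_homog hI nz.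
exact/(ideal_full hI)/(ideal_homog0 hI hg).
Qed.

Lemma twisted_center : 'Z(D)%VS = <[X 0%R]>%VS.
Proof.
apply/eqP; rewrite eqEsubv; apply/andP; split; last first.
  rewrite -memvE; apply/memv_capP; split; first exact: twisted_mem.
  apply/centvP => v _; apply: homog0_central (twisted_homog 0).
  by move=> g; apply: induced_bichar0l hind.
apply/subvP => z /memv_capP[zD /centvP zc]; have [c hc] := twisted_coordP zD.
have c0 g : g != 0 -> c g = 0.
  move=> gnz; apply/eqP; apply: contraT => cg; case: hmin; exists g, 0.
  split=> // h; rewrite (induced_bichar0r hcoc _ hind).
  have comm_z : \sum_(i : G)
      (c i * (beta h (i + 0) - 1) * alpha (i + 0) h) *: X (i + (0 + h)) = 0.
    rewrite -twisted_commutator scale1r.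
    have -> : \sum_(i : G) c i *: X (i + 0) = z.
      by rewrite hc; apply: eq_bigr => i _; rewrite addr0.
    by rewrite (zc _ (twisted_mem h)) subrr.
  have /eqP := twisted_free comm_z g.
  by rewrite addr0 !mulf_eq0 (negbTE cg) (negbTE (anz g h)) orbF subr_eq0 => /eqP.
rewrite hc (bigD1 0) //= big1 ?addr0 => [|g gnz]; last by rewrite c0 ?scale0r.
exact/rpredZ/memv_line.
Qed.

End Twisted.

Variable D : {vspace A}.
Hypothesis hDtw : exists alpha : G -> G -> K,
  [/\ cocycle alpha, induces alpha beta & graded_iso_twisted Ag D alpha].

Lemma twisted_central_simple : graded_subalgebra Ag D -> central_simple_subalgebra D.
Proof.
case=> hDD _; have [alpha [hcoc hind [X [hXD hbas hmul]]]] := hDtw.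
split; first exact: twisted_simple hcoc hXD hbas hmul hDD.
by rewrite (twisted_center hcoc hind hXD hbas hmul) dim_vline (twisted_neq0 hbas).
Qed.

Lemma twisted_unitP : exists2 e, e \in D &
  (forall a, e * a = a * e) /\ (forall d, d \in D -> d * e = d).
Proof.
have [alpha [hcoc hind [X [hXD hbas hmul]]]] := hDtw.
exists (twisted_unit alpha X); first exact: twisted_unit_mem hXD.
split; first exact: twisted_unit_central hcoc hind hXD.
exact: mulr_twisted_unit hcoc hbas hmul.
Qed.

End RegularGrading.

Theorem mainTheorem7 (K : closedFieldType) (hK : [pchar K] =i pred0)
    (G : finZmodType) (A : falgType K)
    (Ag : G -> {vspace A}) (beta : G -> G -> K)
    (hreg : regular_grading Ag beta) (hmin : minimal_regular beta)
    (k : nat) (D : 'I_k -> {vspace A}) (J : {vspace A})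
    (hJ : is_jacobson_radical J)
    (hsum : (\sum_(i < k) D i + J)%VS = fullv)
    (hdir : directv (\sum_(i < k) D i + J)%VS)
    (hsub : forall i, graded_subalgebra Ag (D i))
    (hDD : forall i j, i != j -> (D i * D j)%VS = 0%VS)
    (hiso : forall i, exists alpha : G -> G -> K,
        [/\ cocycle alpha, induces alpha beta & graded_iso_twisted Ag (D i) alpha]) :
  (forall i, central_simple_subalgebra (D i)) /\
  (forall i j, i != j -> (D i * J * D j)%VS = 0%VS).
Proof.
case: hreg => hgr _ _ hcomm.
split=> [i | i j ne]; first exact: (twisted_central_simple hgr hcomm hmin (hiso i) (hsub i)).
have [e eD [ce de]] := twisted_unitP hgr hcomm (hiso i).
have [f fD [cf df]] := twisted_unitP hgr hcomm (hiso j).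
have ef : e * f = 0 by apply/eqP; rewrite -memv0 -(hDD _ _ ne) memv_mul.
apply/eqP; rewrite -subv0; apply: prodv3_sub0 => d a d' hd _ hd'.
have fd' : f * d' = d' by rewrite cf df.
exact: mul_central_orth ce ef (de _ hd) fd'.
Qed.
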